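(* Every tuple-independent probabilistic database has the finite moments property.
   Context: Fix a countably infinite universe $U$. Facts are expressions $R(u_1,\dots,u_{\mathrm{ar}(R)})$ with $R$ from a finite schema and $u_i\in U$; an instance is a finite set of facts, $|D|$ its number of facts. A probabilistic database (PDB) is a discrete probability space $(\mathbb D,P)$ with $\mathbb D$ a nonempty countable set of instances. A PDB has the finite moments property if $\sum_{D\in\mathbb D}|D|^kP(\{D\})<\infty$ for all $k\in\mathbb N_+$. A PDB $\mathcal I$ is tuple-independent if for all $k$ and all pairwise distinct facts $f_1,\dots,f_k$, $\Pr_{I\sim\mathcal I}(f_1\in I,\dots,f_k\in I)=\prod_i\Pr_{I\sim\mathcal I}(f_i\in I)$. *)

From HB Require Import structures.
From mathcomp Require Import all_boot all_order all_algebra.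
From mathcomp Require Import finmap.
From mathcomp Require Import all_classical all_reals.
From mathcomp Require Import ereal esum.

Set Implicit Arguments.
Unset Strict Implicit.
Unset Printing Implicit Defensive.

Import Order.TTheory GRing.Theory Num.Theory.
Local Open Scope classical_set_scope.
Local Open Scope ring_scope.
Local Open Scope fset_scope.

(* The universe U: a fixed countably infinite set, taken to be nat. *)
Definition universe := nat.

(* A (finite) schema: relation symbols form a finite type with an arity map.
   A fact R(u_1,...,u_ar(R)) is a relation symbol with an ar(R)-tuple over U. *)
Definition fact (Rel : finType) (ar : Rel -> nat) : Type :=
  {R : Rel & (ar R).-tuple universe}.

Definition instance (Rel : finType) (ar : Rel -> nat) : Type :=
  {fset (fact ar)}.

(* A probabilistic database: a discrete probability space on instances,
   given by its probability mass function p (the sample space DD is the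
   support of p, which is countable since the type of instances is countable).
   We require the sample space to be nonempty, which follows from total mass 1. *)
Record PDB (R : realType) (Rel : finType) (ar : Rel -> nat) := {
  pmass : instance ar -> R;
  pmass_ge0 : forall D, 0 <= pmass D;
  pmass_sum1 : (\esum_(D in [set: instance ar]) (pmass D)%:E = 1)%E
}.

Definition Pr (R : realType) (Rel : finType) (ar : Rel -> nat)
    (I : PDB R ar) (E : set (instance ar)) : \bar R :=
  (\esum_(D in E) (pmass I D)%:E)%E.

Definition tuple_independent (R : realType) (Rel : finType) (ar : Rel -> nat)
    (I : PDB R ar) : Prop :=
  forall (k : nat) (fs : k.-tuple (fact ar)), uniq fs ->
    Pr I [set D | forall f, f \in fs -> f \in D] =
    (\big[*%E/1%E]_(f <- fs) Pr I [set D | f \in D])%E.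

Definition finite_moments (R : realType) (Rel : finType) (ar : Rel -> nat)
    (I : PDB R ar) : Prop :=
  forall k : nat, (0 < k)%N ->
    (\esum_(D in [set: instance ar]) ((#|` D| ^ k)%:R * pmass I D)%:E < +oo)%E.

(* For a finite list s of facts let X_s(D) count the facts of s lying in D, and
   let S(s) be the sum of their marginal probabilities. Expanding X_s^k over
   k-tuples of facts and using tuple-independence gives
   E[X_s^k] <= prod_(j < k) (j + S(s)); in particular Var X_s <= S(s), so by
   Chebyshev P(2 X_s < S(s)) <= 4 / S(s). Since X_s <= |D| and |D| < N with
   probability > 1/2 for some N, S(s) is bounded independently of s. Finally,
   a finite partial sum of sum_D |D|^k P(D) is at most E[X_s^k] when s lists
   all facts of the instances involved. *)

From mathcomp Require Import all_boot all_order all_algebra finmap.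
From mathcomp Require Import all_classical all_reals ereal esum.
From mathcomp Require Import lra.

Set Implicit Arguments.
Unset Strict Implicit.
Unset Printing Implicit Defensive.

Import Order.TTheory GRing.Theory Num.Theory.
Local Open Scope classical_set_scope.
Local Open Scope ring_scope.

Lemma count_mem_le_size (T : eqType) (s t : seq T) : uniq s ->
  (count (mem t) s <= size t)%N.
Proof.
move=> us; rewrite -size_filter; apply: uniq_leq_size; first exact: filter_uniq.
by move=> x; rewrite mem_filter => /andP[].
Qed.

(* [(X - S)^2 >= S^2/4] on [2 X < S], written without subtraction so that both
   sides are nonnegative random variables when [S, X >= 0]. *)
Lemma indicator_low_le_sq (R : realFieldType) (S X : R) : 0 <= S -> 0 <= X ->
  S ^+ 2 / 4 * ((2 * X < S)%R)%:R + 2 * S * X <= X ^+ 2 + S ^+ 2.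
Proof.
move=> S_ge0 X_ge0; case: ltP => /= lowX; last first.
  by rewrite mulr0 add0r; have := sqr_ge0 (X - S); nra.
have : 0 <= (S / 2 - X) * (3 * S / 2 - X) by rewrite mulr_ge0 //; lra.
nra.
Qed.

Section EsumFinite.
Variables (R : realType) (T : choiceType).

Lemma sum_seq_le_esum (g : T -> R) (r : seq T) : uniq r -> (forall x, 0 <= g x) ->
  ((\sum_(x <- r) g x)%:E <= \esum_(x in [set: T]) (g x)%:E)%E.
Proof.
move=> ur g_ge0; apply: esum_ge; exists [set` r]; first by split=> //; exact: finite_seq.
by rewrite -fsbig_seq // sumEFin.
Qed.

Lemma esum_le_sum_seq_ub (g : T -> R) (c : R) :
  (forall r, uniq r -> \sum_(x <- r) g x <= c) ->
  (\esum_(x in [set: T]) (g x)%:E <= c%:E)%E.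
Proof.
move=> ub; apply: ge_ereal_sup => _ [X [finX _] <-].
by rewrite fsbig_finite // sumEFin lee_fin ub // fset_uniq.
Qed.

Lemma esum_gt_sum_seq (g : T -> R) (c : R) :
  (c%:E < \esum_(x in [set: T]) (g x)%:E)%E ->
  exists2 r, uniq r & c < \sum_(x <- r) g x.
Proof.
move/ereal_sup_gt => [_ [X [finX _] <-]].
rewrite fsbig_finite // sumEFin lte_fin => ltc.
by exists (fset_set X) => //; exact: fset_uniq.
Qed.

Lemma esumZl_EFin (g : T -> R) (c : R) : 0 <= c ->
  (\esum_(x in [set: T]) (c * g x)%:E = c%:E * \esum_(x in [set: T]) (g x)%:E)%E.
Proof.
move=> c_ge0; rewrite /esum -ereal_supZl //; last first.
  by apply/set0P; exists 0%E, set0 => //; rewrite fsbig_set0.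
congr ereal_sup; rewrite image_comp; apply: eq_imagel => A [finA _] /=.
by rewrite !fsbig_finite // !sumEFin -EFinM mulr_sumr.
Qed.

End EsumFinite.

Section DiscreteExpectation.
Variables (R : realType) (T : choiceType) (p : T -> R).
Hypothesis p_ge0 : forall x, 0 <= p x.
Hypothesis p_sum1 : (\esum_(x in [set: T]) (p x)%:E = 1)%E.

Definition bounded_nonneg (g : T -> R) := exists c, forall x, 0 <= g x <= c.

(* Meaningful for [bounded_nonneg g] only: otherwise the sum may be [+oo], which
   [fine] sends to 0. *)
Definition expect (g : T -> R) : R := fine (\esum_(x in [set: T]) (g x * p x)%:E).

Lemma sum_seq_p_le1 r : uniq r -> \sum_(x <- r) p x <= 1.
Proof. by move=> ur; rewrite -lee_fin -p_sum1 sum_seq_le_esum //. Qed.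

Lemma expectE g : bounded_nonneg g ->
  (\esum_(x in [set: T]) (g x * p x)%:E)%E = (expect g)%:E.
Proof.
case=> c gc; have gp_ge0 x : 0 <= g x * p x by rewrite mulr_ge0 //; case/andP: (gc x).
rewrite fineK // ge0_fin_numE; last by apply: esum_ge0 => x _; rewrite lee_fin.
apply: (@le_lt_trans _ _ `|c|%:E); last exact: ltry.
apply: esum_le_sum_seq_ub => r ur; apply: (@le_trans _ _ (\sum_(x <- r) `|c| * p x)).
  apply: ler_sum => x _; rewrite ler_wpM2r //.
  by case/andP: (gc x) => _ /le_trans; apply; exact: ler_norm.
by rewrite -mulr_sumr ler_piMr // sum_seq_p_le1.
Qed.

Lemma expect_ge0 g : (forall x, 0 <= g x) -> 0 <= expect g.
Proof. by move=> g_ge0; apply/fine_ge0/esum_ge0 => x _; rewrite lee_fin mulr_ge0. Qed.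

Lemma sum_seq_le_expect g r : uniq r -> bounded_nonneg g ->
  \sum_(x <- r) g x * p x <= expect g.
Proof.
move=> ur gb; rewrite -lee_fin -expectE // sum_seq_le_esum // => x.
by case: gb => c /(_ x) /andP[g_ge0 _]; rewrite mulr_ge0.
Qed.

Lemma le_expect g h : bounded_nonneg h -> (forall x, 0 <= g x <= h x) ->
  expect g <= expect h.
Proof.
move=> hb gh; have gb : bounded_nonneg g.
  case: hb => c hc; exists c => x.
  by case/andP: (gh x) => -> /le_trans; apply; case/andP: (hc x).
rewrite -lee_fin -!expectE //; apply: le_esum => x _.
by rewrite lee_fin ler_wpM2r //; case/andP: (gh x).
Qed.

Lemma expectZ c g : 0 <= c -> bounded_nonneg g ->
  expect (fun x => c * g x) = c * expect g.
Proof.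
move=> c_ge0 gb; rewrite /expect (eq_esum (b := fun x => (c * (g x * p x))%:E)).
  by rewrite esumZl_EFin // expectE.
by move=> x _; rewrite mulrA.
Qed.

Lemma expectD g h : bounded_nonneg g -> bounded_nonneg h ->
  expect (fun x => g x + h x) = expect g + expect h.
Proof.
move=> gb hb; rewrite /expect (eq_esum (b := fun x => ((g x * p x)%:E + (h x * p x)%:E)%E)).
  rewrite esumD ?expectE // => x _; rewrite lee_fin mulr_ge0 //.
    by case: gb => c /(_ x) /andP[].
  by case: hb => c /(_ x) /andP[].
by move=> x _; rewrite mulrDl EFinD.
Qed.

Lemma expect_sum (I : choiceType) (s : seq I) (G : I -> T -> R) :
  (forall i, bounded_nonneg (G i)) ->
  expect (fun x => \sum_(i <- s) G i x) = \sum_(i <- s) expect (G i).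
Proof.
move=> Gb; rewrite /expect (eq_esum (b := fun x => (\sum_(i <- s) (G i x * p x)%:E)%E)).
  rewrite esum_sum => [|x i _ _]; last first.
    by rewrite lee_fin mulr_ge0 //; case: (Gb i) => c /(_ x) /andP[].
  by under eq_bigr do rewrite expectE //; rewrite sumEFin.
by move=> x _; rewrite sumEFin mulr_suml.
Qed.

Lemma expect_cst c : 0 <= c -> expect (fun=> c) = c.
Proof. by move=> c_ge0; rewrite /expect esumZl_EFin // p_sum1 mule1. Qed.

Lemma bounded_nonneg_natr (n : T -> nat) (N : nat) : (forall x, (n x <= N)%N) ->
  bounded_nonneg (fun x => (n x)%:R).
Proof. by move=> nN; exists N%:R => x; rewrite ler0n ler_nat nN. Qed.

Lemma bounded_nonneg_bool (b : T -> bool) : bounded_nonneg (fun x => (b x)%:R).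
Proof. by apply: (@bounded_nonneg_natr _ 1) => x; exact: leq_b1. Qed.

Lemma bounded_nonnegZ c g : 0 <= c -> bounded_nonneg g ->
  bounded_nonneg (fun x => c * g x).
Proof.
move=> c_ge0 [d gd]; exists (c * d) => x; case/andP: (gd x) => g_ge0 g_le.
by rewrite mulr_ge0 // ler_wpM2l.
Qed.

Lemma bounded_nonnegD g h : bounded_nonneg g -> bounded_nonneg h ->
  bounded_nonneg (fun x => g x + h x).
Proof.
move=> [c gc] [d hd]; exists (c + d) => x.
by case/andP: (gc x) => ? ?; case/andP: (hd x) => ? ?; rewrite addr_ge0 // lerD.
Qed.

Lemma nat_rv_tight (n : T -> nat) : exists N, 1 / 2 < expect (fun x => (n x < N)%:R).
Proof.
have : ((1 / 2 : R)%:E < \esum_(x in [set: T]) (p x)%:E)%E by rewrite p_sum1 lte_fin; lra.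
case/esum_gt_sum_seq => r ur half_lt; set N := (\sum_(x <- r) n x).+1; exists N.
apply: (lt_le_trans half_lt); rewrite (eq_big_seq (fun x => (n x < N)%:R * p x)).
  by apply: sum_seq_le_expect => //; exact: bounded_nonneg_bool.
by move=> x xr; rewrite ltnS (bigD1_seq x) //= leq_addr mul1r.
Qed.

End DiscreteExpectation.

Section TupleIndependent.
Variables (R : realType) (Rel : finType) (ar : Rel -> nat) (I : PDB R ar).

Local Notation fct := (fact ar).
Local Notation inst := (instance ar).
Local Notation E := (expect (pmass I)).

Let p_ge0 := pmass_ge0 I.
Let p_sum1 := pmass_sum1 I.

Definition all_in (t : seq fct) (D : inst) : bool := all (fun f => f \in D) t.
Definition count_in (s : seq fct) (D : inst) : nat := count (fun f => f \in D) s.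

Definition prob_all (t : seq fct) : R := E (fun D => (all_in t D)%:R).
Definition marginal (f : fct) : R := prob_all [:: f].
Definition marginal_sum (s : seq fct) : R := \sum_(f <- s) marginal f.

Lemma count_in_le_card s D : uniq s -> (count_in s D <= #|` D|)%N.
Proof. exact: count_mem_le_size. Qed.

Lemma count_in_pow_le s k D : (count_in s D ^ k <= size s ^ k)%N.
Proof. by case: k => // k; rewrite leq_exp2r // count_size. Qed.

Lemma prob_all_ge0 t : 0 <= prob_all t.
Proof. by apply: expect_ge0 => // D; rewrite ler0n. Qed.

Lemma marginal_sum_ge0 s : 0 <= marginal_sum s.
Proof. by apply: sumr_ge0 => f _; exact: prob_all_ge0. Qed.

Lemma prob_all_nil : prob_all [::] = 1.
Proof. exact: (expect_cst p_sum1 ler01). Qed.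

Lemma Pr_all_in t : Pr I [set D | forall f, f \in t -> f \in D] = (prob_all t)%:E.
Proof.
rewrite /Pr esum_mkcond /prob_all -(expectE p_ge0 p_sum1 (bounded_nonneg_bool _ _)).
apply: eq_esum => D _; rewrite /all_in; case: (boolP (all _ t)) => /allP tD.
  by rewrite mem_set ?mul1r.
by rewrite memNset ?mul0r.
Qed.

Lemma Pr_in f : Pr I [set D | f \in D] = (marginal f)%:E.
Proof.
rewrite /marginal -Pr_all_in; congr Pr; apply/seteqP; split=> D /=.
  by move=> fD g; rewrite mem_seq1 => /eqP ->.
by apply; rewrite mem_seq1.
Qed.

Lemma prob_all_undup t : prob_all (undup t) = prob_all t.
Proof. by rewrite /prob_all /all_in; congr expect; apply: funext => D; rewrite all_undup. Qed.

Hypothesis indep : tuple_independent I.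

Lemma prob_all_uniq t : uniq t -> prob_all t = \prod_(f <- t) marginal f.
Proof.
move=> ut; have := @indep _ (in_tuple t) ut; rewrite Pr_all_in.
rewrite (eq_bigr (fun f => (marginal f)%:E)) => [|f _]; last exact: Pr_in.
by rewrite prodEFin => -[].
Qed.

Lemma prob_all_cons f t :
  prob_all (f :: t) = (if f \in t then 1 else marginal f) * prob_all t.
Proof.
case: ifP => ft.
  rewrite mul1r /prob_all /all_in; congr expect; apply: funext => D /=.
  by rewrite andb_idl // => /allP; apply.
rewrite -prob_all_undup /= ft prob_all_uniq /= ?mem_undup ?ft ?undup_uniq //.
by rewrite big_cons -prob_all_uniq ?undup_uniq // prob_all_undup.
Qed.

Lemma sum_prob_all_cons_le s t : uniq s ->
  \sum_(f <- s) prob_all (f :: t) <= ((size t)%:R + marginal_sum s) * prob_all t.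
Proof.
move=> us; rewrite mulrDl /marginal_sum mulr_suml.
apply: (@le_trans _ _ (\sum_(f <- s) ((f \in t)%:R * prob_all t + marginal f * prob_all t))).
  apply: ler_sum => f _; rewrite prob_all_cons.
  by case: ifP => _; rewrite ?mul1r ?lerDl ?mulr_ge0 ?prob_all_ge0 ?mul0r ?add0r.
rewrite big_split /= -mulr_suml lerD2r ler_wpM2r ?prob_all_ge0 //.
rewrite -natr_sum ler_nat; apply: leq_trans (count_mem_le_size t us).
by rewrite -sumn_count sumnE big_map.
Qed.

Definition moment_rv (s : seq fct) (k : nat) (t : seq fct) (D : inst) : nat :=
  (all_in t D * count_in s D ^ k)%N.

Definition mixed_moment s k t : R := E (fun D => (moment_rv s k t D)%:R).

Lemma bounded_moment_rv s k t : bounded_nonneg (fun D => (moment_rv s k t D)%:R : R).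
Proof.
apply: (@bounded_nonneg_natr _ _ _ (size s ^ k)) => D.
by rewrite /moment_rv -[X in (_ <= X)%N]mul1n leq_mul ?leq_b1 ?count_in_pow_le.
Qed.

Lemma mixed_moment0 s t : mixed_moment s 0 t = prob_all t.
Proof. by rewrite /mixed_moment /moment_rv; congr expect; apply: funext => D; rewrite muln1. Qed.

Lemma mixed_momentS s k t :
  mixed_moment s k.+1 t = \sum_(f <- s) mixed_moment s k (f :: t).
Proof.
rewrite /mixed_moment -(expect_sum p_ge0 p_sum1) => [|f]; last exact: bounded_moment_rv.
congr expect; apply: funext => D; rewrite -natr_sum; congr _%:R.
rewrite /moment_rv expnS mulnCA; set Xk := (count_in s D ^ k)%N.
rewrite /count_in -sumn_count sumnE big_map big_distrl /=.
by apply: eq_bigr => f _; rewrite /all_in /= mulnA -mulnb.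
Qed.

Lemma mixed_moment_le s k t : uniq s ->
  mixed_moment s k t <= \prod_(j < k) ((size t + j)%:R + marginal_sum s) * prob_all t.
Proof.
move=> us; elim: k t => [|k IHk] t; first by rewrite mixed_moment0 big_ord0 mul1r.
rewrite mixed_momentS big_ord_recl addn0.
under [\prod_(j < k) _]eq_bigr do rewrite lift0 -addSnnS.
rewrite [_ * \prod_(j < k) _]mulrC -mulrA; set c := \prod_(j < k) _.
have c_ge0 : 0 <= c by apply: prodr_ge0 => j _; rewrite addr_ge0 ?marginal_sum_ge0.
apply: (@le_trans _ _ (\sum_(f <- s) c * prob_all (f :: t))).
  by apply: ler_sum => f _; exact: IHk.
by rewrite -mulr_sumr ler_wpM2l // sum_prob_all_cons_le.
Qed.

Lemma count_in_moment_le s k : uniq s ->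
  E (fun D => (count_in s D ^ k)%:R) <= \prod_(j < k) (j%:R + marginal_sum s).
Proof.
move=> us; have -> : E (fun D => (count_in s D ^ k)%:R) = mixed_moment s k [::].
  by congr expect; apply: funext => D; rewrite /moment_rv mul1n.
by apply: le_trans (mixed_moment_le k [::] us) _; rewrite prob_all_nil mulr1.
Qed.

Lemma expect_count_in s : E (fun D => (count_in s D)%:R) = marginal_sum s.
Proof.
have -> : E (fun D => (count_in s D)%:R) = mixed_moment s 1 [::].
  by congr expect; apply: funext => D; rewrite /moment_rv mul1n expn1.
by rewrite mixed_momentS; apply: eq_bigr => f _; rewrite mixed_moment0.
Qed.

Lemma chebyshev_count_in s : uniq s ->
  marginal_sum s ^+ 2 * E (fun D => ((2 * (count_in s D)%:R < marginal_sum s)%R)%:R)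
  <= 4 * marginal_sum s.
Proof.
move=> us; set S := marginal_sum s; have S_ge0 : 0 <= S := marginal_sum_ge0 s.
pose X D : R := (count_in s D)%:R.
pose low D : R := ((2 * X D < S)%R)%:R.
change (S ^+ 2 * E low <= 4 * S).
have bX : bounded_nonneg X.
  by apply: (@bounded_nonneg_natr _ _ _ (size s)) => D; exact: count_size.
have bX2 : bounded_nonneg (fun D => (count_in s D ^ 2)%:R : R).
  exact: bounded_nonneg_natr (count_in_pow_le s 2).
have blow : bounded_nonneg low by exact: bounded_nonneg_bool.
have bS2 : bounded_nonneg (fun _ : inst => S ^+ 2) by exists (S ^+ 2) => D; rewrite sqr_ge0 lexx.
have c1_ge0 : 0 <= S ^+ 2 / 4 by rewrite divr_ge0 ?sqr_ge0.
have c2_ge0 : 0 <= 2 * S by rewrite mulr_ge0.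
have pointwise D : 0 <= S ^+ 2 / 4 * low D + 2 * S * X D <= (count_in s D ^ 2)%:R + S ^+ 2.
  have X_ge0 : 0 <= X D := ler0n R _.
  by rewrite natrX indicator_low_le_sq // andbT addr_ge0 ?mulr_ge0 // ler0n.
have := le_expect p_ge0 p_sum1 (bounded_nonnegD bX2 bS2) pointwise.
rewrite (expectD p_ge0 p_sum1 bX2 bS2) (expect_cst p_sum1 (sqr_ge0 S)).
rewrite (expectD p_ge0 p_sum1 (bounded_nonnegZ c1_ge0 blow) (bounded_nonnegZ c2_ge0 bX)).
rewrite (expectZ p_ge0 p_sum1 c1_ge0 blow) (expectZ p_ge0 p_sum1 c2_ge0 bX) expect_count_in.
have := count_in_moment_le 2 us; rewrite !big_ord_recl big_ord0 lift0 /= -/S add0r mulr1; lra.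
Qed.

(* If S(s) > 2 N then [2 X_s < S(s)] whenever |D| < N, so Chebyshev forces
   S(s)^2 / 2 < 4 S(s). *)
Lemma marginal_sum_bounded : exists M, forall s, uniq s -> marginal_sum s <= M.
Proof.
have [N half_lt] := nat_rv_tight p_ge0 p_sum1 (fun D : inst => #|` D|).
have N_ge0 : 0 <= N%:R :> R := ler0n R N.
exists (2 * N%:R + 8) => s us; set S := marginal_sum s.
have S_ge0 : 0 <= S := marginal_sum_ge0 s.
have [|S_gt] := lerP S (2 * N%:R); first lra.
have low_gt : 1 / 2 < E (fun D => ((2 * (count_in s D)%:R < S)%R)%:R).
  apply: (lt_le_trans half_lt); apply: le_expect => // [|D].
    exact: bounded_nonneg_bool.
  case: ltnP => [small|_]; last by rewrite ler0n ler_nat.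
  have : (count_in s D < N)%N by rewrite (leq_ltn_trans (count_in_le_card D us)).
  rewrite -(ltr_nat R) => X_lt; have -> : (2 * (count_in s D)%:R < S)%R by lra.
  by rewrite ler0n lexx.
have := chebyshev_count_in us; rewrite -/S; nra.
Qed.

Lemma esum_card_pow_le M : (forall s, uniq s -> marginal_sum s <= M) -> forall k,
  (\esum_(D in [set: inst]) ((#|` D| ^ k)%:R * pmass I D)%:E <= ((k%:R + M) ^+ k)%:E)%E.
Proof.
move=> Mb k; apply: esum_le_sum_seq_ub => r ur.
pose s := undup (flatten [seq enum_fset D | D <- r]).
have us : uniq s := undup_uniq _.
have count_in_card D : D \in r -> count_in s D = #|` D|.
  move=> Dr; apply/eqP; rewrite eqn_leq count_in_le_card //= /count_in -size_filter.
  apply: uniq_leq_size; first exact: fset_uniq.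
  move=> f fD; rewrite mem_filter fD mem_undup /=; apply/flattenP.
  by exists (enum_fset D) => //; apply: map_f.
rewrite (eq_big_seq (fun D => (count_in s D ^ k)%:R * pmass I D)) => [|D Dr]; last first.
  by rewrite count_in_card.
apply: le_trans (sum_seq_le_expect p_ge0 p_sum1 ur _) _.
  exact: bounded_nonneg_natr (count_in_pow_le s k).
apply: le_trans (count_in_moment_le k us) _.
rewrite -[X in _ ^+ X]card_ord -prodr_const; apply: ler_prod => j _.
by rewrite addr_ge0 ?marginal_sum_ge0 //= lerD ?Mb // ler_nat ltnW.
Qed.

End TupleIndependent.

Theorem proposition3p3 (R : realType) (Rel : finType) (ar : Rel -> nat)
  (I : PDB R ar) :
  tuple_independent I -> finite_moments I.
Proof.
move=> indep k _; have [M Mb] := marginal_sum_bounded indep.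
exact: le_lt_trans (esum_card_pow_le indep Mb k) (ltry _).
Qed.
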